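(* Let $\mathbf X\in\mathscr C^p_\omega([0,T],\mathcal M)$. (1) If $\boldsymbol H\in\mathscr D_X(\mathbb R^{e\times d})$ satisfies $\boldsymbol H=\boldsymbol H\cdot\boldsymbol Q(X)$, then $\int\boldsymbol H\,d_{\mathcal M}\mathbf X=0$ as a rough path. (2) Consequently, if $\boldsymbol H,\boldsymbol K\in\mathscr D_X(\mathbb R^{e\times d})$ satisfy $\boldsymbol K-\boldsymbol H=(\boldsymbol K-\boldsymbol H)\cdot\boldsymbol Q(X)$, then $\int\boldsymbol H\,d_{\mathcal M}\mathbf X=\int\boldsymbol K\,d_{\mathcal M}\mathbf X$ as rough paths.
   Context: Let $\mathcal M\subseteq\mathbb R^d$ be an embedded smooth submanifold, $\Pi$ the nearest-point (Riemannian) projection onto $\mathcal M$, defined and smooth on a tubular neighbourhood $A$ of $\mathcal M$ (so $\Pi\circ\Pi=\Pi$, $\Pi|_{\mathcal M}=\mathrm{id}$). Set $P:=D\Pi$ and $Q:=I_d-D\Pi$ on $A$; for $y\in\mathcal M$, $P(y)$ and $Q(y)$ are the orthogonal projections onto the tangent and normal spaces. Fix $p\in[1,3)$ and a control $\omega$. Euclidean rough paths $\mathbf X=(X,\mathbb X)$ ($|X_{st}|\lesssim\omega^{1/p}$, $|\mathbb X_{st}|\lesssim\omega^{2/p}$, Chen's identity $\mathbb X^{ab}_{st}=\mathbb X^{ab}_{su}+X^a_{su}X^b_{ut}+\mathbb X^{ab}_{ut}$); controlled paths $(H,H')$ with $H_{st}-H'_sX_{st}=O(\omega^{2/p})$,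 matrix-valued ones with differentiation index first (for $\boldsymbol H\in\mathscr D_X(\mathbb R^{e\times d})$: trace $H_b$, derivative $H'_{ab}$); rough integral $\int\boldsymbol H\,d\mathbf X=\lim\sum H_{c;u}X^c_{uv}+H'_{ab;u}\mathbb X^{ab}_{uv}$, viewed as rough path via the lift with second order part $\approx H^i_{a;s}H^j_{b;s}\mathbb X^{ab}_{st}$ ($\approx$ = up to $o(\omega(s,t))$). Pushforward $\Pi_*\mathbf X$: rough path with trace $\Pi(X)$ and second order part $\approx\partial_a\Pi^c\partial_b\Pi^d(X_s)\mathbb X^{ab}_{st}$. $\mathscr C^p_\omega([0,T],\mathcal M)$ is the set of rough paths with trace in $\mathcal M$ and $\Pi_*\mathbf X=\mathbf X$. Pullback: $\Pi^*\boldsymbol H=(H_c\partial_b\Pi^c(X),\,H'_{ij}\partial_a\Pi^i\partial_b\Pi^j(X)+H_c\partial_{ab}\Pi^c(X))$. Constrained rough integral: $\int\boldsymbol H\,d_{\mathcal M}\mathbf X:=\int\Pi^*\boldsymbol H\,d\mathbf X$. $\boldsymbol Q(X)$ is the $X$-controlled path $(Q^c_b(X),\partial_aQ^c_b(X))=(Q^c_b(X),-\partial_{ab}\Pi^c(X))$, and the Leibniz product is $\boldsymbol H\cdot\boldsymbol Q(X)=(H_cQ^c_b(X),\,H'_{ac}Q^c_b(X)+H_c\partial_aQ^c_b(X))$. *)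

From HB Require Import structures.
From mathcomp Require Import all_boot all_order all_algebra.
From mathcomp Require Import all_classical all_reals all_analysis.
Set Implicit Arguments. Unset Strict Implicit. Unset Printing Implicit Defensive.
Import Order.TTheory GRing.Theory Num.Theory.
Import numFieldNormedType.Exports.
Local Open Scope classical_set_scope.
Local Open Scope ring_scope.

Section Defs.
Variable R : realType.

Definition evec (d : nat) (a : 'I_d) : 'cV[R]_d := delta_mx a 0.

Definition eucl2 (d : nat) (x : 'cV[R]_d) : R := \sum_(i < d) x i 0 ^+ 2.

Definition jac (d m : nat) (F : 'cV[R]_d -> 'cV[R]_m) (x : 'cV[R]_d)
  : 'M[R]_(m, d) := \matrix_(i, a) ('D_(evec a) F x) i 0.

Fixpoint Ck_on (k d m : nat) (A : set 'cV[R]_d) (F : 'cV[R]_d -> 'cV[R]_m)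
  : Prop :=
  match k with
  | 0 => {in A, continuous F}
  | k'.+1 => (forall x, A x -> differentiable F x) /\
             (forall a : 'I_d, Ck_on k' A (fun y => 'D_(evec a) F y))
  end.

Definition smooth_on (d m : nat) (A : set 'cV[R]_d) (F : 'cV[R]_d -> 'cV[R]_m)
  := forall k, Ck_on k A F.

(* embedded smooth submanifold of R^d (of some dimension k), via local
   regular defining equations *)
Definition embedded_submanifold (d : nat) (M : set 'cV[R]_d) : Prop :=
  exists k : nat, (k <= d)%N /\
  forall y, M y -> exists (U : set 'cV[R]_d) (F : 'cV[R]_d -> 'cV[R]_(d - k)),
    [/\ open U, U y, smooth_on U F,
        (forall x, U x -> \rank (jac F x) = (d - k)%N) &
        (forall x, U x -> (M x <-> F x = 0))].

(* Pi is the nearest-point projection onto M, defined (with a unique nearest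
   point) and smooth on the tubular neighbourhood A of M *)
Definition nearest_point_projection (d : nat) (M A : set 'cV[R]_d)
  (Pi : 'cV[R]_d -> 'cV[R]_d) : Prop :=
  [/\ open A, M `<=` A, smooth_on A Pi &
      forall x, A x ->
        [/\ M (Pi x),
            (forall y, M y -> eucl2 (x - Pi x) <= eucl2 (x - y)) &
            (forall y, M y -> eucl2 (x - y) = eucl2 (x - Pi x) -> y = Pi x)]].

Definition DPi (d : nat) (Pi : 'cV[R]_d -> 'cV[R]_d) (x : 'cV[R]_d) : 'M[R]_d :=
  jac Pi x.
Definition D2Pi (d : nat) (Pi : 'cV[R]_d -> 'cV[R]_d) (x : 'cV[R]_d)
  (a b : 'I_d) : 'cV[R]_d :=
  'D_(evec a) (fun y => 'D_(evec b) Pi y) x.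
Definition Qmx (d : nat) (Pi : 'cV[R]_d -> 'cV[R]_d) (x : 'cV[R]_d) : 'M[R]_d :=
  1%:M - DPi Pi x.
(* derivative part of Q(X): (dQ x a) entry (c,b) = d_a Q^c_b = - d_ab Pi^c *)
Definition dQmx (d : nat) (Pi : 'cV[R]_d -> 'cV[R]_d) (x : 'cV[R]_d)
  (a : 'I_d) : 'M[R]_d :=
  \matrix_(c, b) - (D2Pi Pi x a b) c 0.

Definition in_simplex (T s t : R) := 0 <= s /\ s <= t /\ t <= T.

Definition control (T : R) (w : R -> R -> R) : Prop :=
  [/\ (forall s t, in_simplex T s t -> 0 <= w s t),
      (forall t, 0 <= t <= T -> w t t = 0),
      (forall s u t, 0 <= s -> s <= u -> u <= t -> t <= T ->
          w s u + w u t <= w s t) &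
      {within [set st : R * R | in_simplex T st.1 st.2],
         continuous (fun st : R * R => w st.1 st.2)}].

Definition little_o_w (m n : nat) (T : R) (w : R -> R -> R)
  (f : R -> R -> 'M[R]_(m, n)) : Prop :=
  forall eps : R, 0 < eps -> exists2 delta : R, 0 < delta &
    forall s t, in_simplex T s t -> t - s < delta -> `|f s t| <= eps * w s t.

Definition rough_path (n : nat) (T p : R) (w : R -> R -> R)
  (Z : R -> 'cV[R]_n) (ZZ : R -> R -> 'M[R]_n) : Prop :=
  (exists C : R, forall s t, in_simplex T s t ->
     `|Z t - Z s| <= C * w s t `^ p^-1 /\
     `|ZZ s t| <= C * w s t `^ (2 / p)) /\
  (forall s u t, 0 <= s -> s <= u -> u <= t -> t <= T ->
     ZZ s t = ZZ s u + (Z u - Z s) *m (Z t - Z u)^T + ZZ u t).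

Definition is_pushforward (d : nat) (T p : R) (w : R -> R -> R)
  (Pi : 'cV[R]_d -> 'cV[R]_d) (X : R -> 'cV[R]_d) (XX : R -> R -> 'M[R]_d)
  (Y : R -> 'cV[R]_d) (YY : R -> R -> 'M[R]_d) : Prop :=
  [/\ rough_path T p w Y YY,
      (forall t, 0 <= t <= T -> Y t = Pi (X t)) &
      little_o_w T w (fun s t =>
         YY s t - DPi Pi (X s) *m XX s t *m (DPi Pi (X s))^T)].

Definition manifold_rough_path (d : nat) (T p : R) (w : R -> R -> R)
  (M : set 'cV[R]_d) (Pi : 'cV[R]_d -> 'cV[R]_d)
  (X : R -> 'cV[R]_d) (XX : R -> R -> 'M[R]_d) : Prop :=
  [/\ rough_path T p w X XX,
      (forall t, 0 <= t <= T -> M (X t)) &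
      is_pushforward T p w Pi X XX X XX].

(* (H, H') in D_X(R^{e x d}); H t : e x d matrix (entry (i,b) = H^i_b),
   H' t a : e x d matrix (entry (i,b) = H'^i_{ab}), derivative index first *)
Definition controlled (d e : nat) (T p : R) (w : R -> R -> R)
  (X : R -> 'cV[R]_d) (H : R -> 'M[R]_(e, d)) (H' : R -> 'I_d -> 'M[R]_(e, d))
  : Prop :=
  exists C : R, forall s t, in_simplex T s t ->
    (forall a, `|H' t a - H' s a| <= C * w s t `^ p^-1) /\
    `|H t - H s - \sum_(a < d) (X t - X s) a 0 *: H' s a|
        <= C * w s t `^ (2 / p).

Definition leibnizQ_trace (d e : nat) (Pi : 'cV[R]_d -> 'cV[R]_d)
  (X : R -> 'cV[R]_d) (H : R -> 'M[R]_(e, d)) : R -> 'M[R]_(e, d) :=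
  fun t => H t *m Qmx Pi (X t).
Definition leibnizQ_deriv (d e : nat) (Pi : 'cV[R]_d -> 'cV[R]_d)
  (X : R -> 'cV[R]_d) (H : R -> 'M[R]_(e, d)) (H' : R -> 'I_d -> 'M[R]_(e, d))
  : R -> 'I_d -> 'M[R]_(e, d) :=
  fun t a => H' t a *m Qmx Pi (X t) + H t *m dQmx Pi (X t) a.

Definition pullback_trace (d e : nat) (Pi : 'cV[R]_d -> 'cV[R]_d)
  (X : R -> 'cV[R]_d) (H : R -> 'M[R]_(e, d)) : R -> 'M[R]_(e, d) :=
  fun t => H t *m DPi Pi (X t).
Definition pullback_deriv (d e : nat) (Pi : 'cV[R]_d -> 'cV[R]_d)
  (X : R -> 'cV[R]_d) (H : R -> 'M[R]_(e, d)) (H' : R -> 'I_d -> 'M[R]_(e, d))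
  : R -> 'I_d -> 'M[R]_(e, d) :=
  fun t a => \matrix_(k, b)
    ((\sum_(i < d) \sum_(j < d)
        H' t i k j * DPi Pi (X t) i a * DPi Pi (X t) j b)
     + \sum_(c < d) H t k c * (D2Pi Pi (X t) a b) c 0).

Definition rough_germ (d e : nat) (X : R -> 'cV[R]_d) (XX : R -> R -> 'M[R]_d)
  (H : R -> 'M[R]_(e, d)) (H' : R -> 'I_d -> 'M[R]_(e, d)) (u v : R)
  : 'cV[R]_e :=
  H u *m (X v - X u) +
  \sum_(a < d) \sum_(b < d) XX u v a b *: col b (H' u a).

(* partitions s = u_0 < u_1 < ... < u_n = t, given as s and [:: u_1; ..; u_n] *)
Definition is_partition (s t : R) (l : seq R) : Prop :=
  path <%R s l /\ last s l = t.
Definition mesh (s : R) (l : seq R) : R :=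
  \big[Num.max/0]_(uv <- zip (s :: l) l) (uv.2 - uv.1).
Definition riemann_sum (e : nat) (g : R -> R -> 'cV[R]_e) (s : R) (l : seq R)
  : 'cV[R]_e := \sum_(uv <- zip (s :: l) l) g uv.1 uv.2.

Definition is_rough_integral (d e : nat) (T p : R) (w : R -> R -> R)
  (X : R -> 'cV[R]_d) (XX : R -> R -> 'M[R]_d)
  (H : R -> 'M[R]_(e, d)) (H' : R -> 'I_d -> 'M[R]_(e, d))
  (Z : R -> 'cV[R]_e) (ZZ : R -> R -> 'M[R]_e) : Prop :=
  [/\ rough_path T p w Z ZZ, Z 0 = 0,
      (forall s t, in_simplex T s t ->
         forall eps : R, 0 < eps -> exists2 delta : R, 0 < delta &
           forall l, is_partition s t l -> mesh s l < delta ->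
             `|riemann_sum (rough_germ X XX H H') s l - (Z t - Z s)| < eps) &
      little_o_w T w (fun s t => ZZ s t - H s *m XX s t *m (H s)^T)].

Definition is_constrained_rough_integral (d e : nat) (T p : R)
  (w : R -> R -> R) (Pi : 'cV[R]_d -> 'cV[R]_d)
  (X : R -> 'cV[R]_d) (XX : R -> R -> 'M[R]_d)
  (H : R -> 'M[R]_(e, d)) (H' : R -> 'I_d -> 'M[R]_(e, d))
  (Z : R -> 'cV[R]_e) (ZZ : R -> R -> 'M[R]_e) : Prop :=
  is_rough_integral T p w X XX (pullback_trace Pi X H)
    (pullback_deriv Pi X H H') Z ZZ.

End Defs.

From HB Require Import structures.
From mathcomp Require Import all_boot all_order all_algebra.
From mathcomp Require Import all_classical all_reals all_analysis.
From mathcomp Require Import lra.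
Import Order.TTheory GRing.Theory Num.Theory.
Import numFieldNormedType.Exports.
Local Open Scope classical_set_scope.
Local Open Scope ring_scope.

(* Along a rough path X on M the pullback Pi^*H of a controlled path H with
   H = H . Q(X) vanishes identically; hence int H d_M X is a rough integral of
   the zero integrand, and such an integral is the zero rough path.

   1. Differentiating Pi o Pi = Pi on the tubular neighbourhood A gives, at
      every fixed point y = Pi y, the identities P^2 = P (P = D Pi(y)) and a
      second-order identity expressing d_ab Pi through its tangential part.
   2. Pure linear algebra: with these identities, H = H (I - P) and
      H' = H' (I - P) + H dQ force H P = 0 and the Gubinelli derivative of
      Pi^*H to vanish.
   3. Analysis of rough integrals: if the integrand vanishes on [0,T], the
      compensated Riemann sums vanish, so the trace is constant (and 0), and
      the second-order part is additive by Chen's relation and o(w), hence 0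
      by superadditivity of w; conversely the zero rough path is such an
      integral. Rough integrals also depend only on the integrand on [0,T].
   Part (2) of the theorem follows since Pi^* is linear, so Pi^*H and Pi^*K
   agree along X. *)

Set Implicit Arguments. Unset Strict Implicit. Unset Printing Implicit Defensive.

Section DirectionalDerivatives.
Variable R : realType.

Lemma derivable_coord (V : normedModType R) m n (f : V -> 'M[R]_(m, n)) x v i j :
  derivable f x v -> derivable (fun z => f z i j) x v.
Proof. by move/derivable_mxP. Qed.

Lemma derive_coord (V : normedModType R) m n (f : V -> 'M[R]_(m, n)) x v i j :
  derivable f x v -> 'D_v (fun z => f z i j) x = ('D_v f x) i j.
Proof. by move=> df; rewrite derive_mx // mxE. Qed.

Lemma cV_in_basis d (u : 'cV[R]_d) : u = \sum_(i < d) u i 0 *: evec R i.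
Proof.
apply/matrixP => c j; rewrite (ord1 j) summxE (bigD1 c) //= big1 ?addr0.
  by rewrite !mxE eqxx mulr1.
by move=> i ic; rewrite !mxE eq_sym (negbTE ic) mulr0.
Qed.

Lemma diff_in_basis d (W : normedModType R) (g : 'cV[R]_d -> W) z u :
  differentiable g z -> 'd g z u = \sum_(i < d) u i 0 *: 'D_(evec R i) g z.
Proof.
move=> dz; rewrite {1}(cV_in_basis u) linear_sum; apply: eq_bigr => i _.
by rewrite linearZ /= deriveE.
Qed.

End DirectionalDerivatives.

(* Differential identities satisfied by a C^2 retraction Pi (Pi o Pi = Pi)
   of an open set A, at its fixed points; the nearest-point projection onto M
   is such a retraction and M consists of fixed points. *)
Section RetractionIdentities.
Variables (R : realType) (d : nat) (Pi : 'cV[R]_d -> 'cV[R]_d)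
  (A : set 'cV[R]_d).
Hypotheses (openA : open A) (dPi : forall x, A x -> differentiable Pi x)
  (dDPi : forall (a : 'I_d) x, A x ->
     differentiable (fun z => 'D_(evec R a) Pi z) x)
  (APi : forall x, A x -> A (Pi x))
  (PiPi : forall x, A x -> Pi (Pi x) = Pi x).

(* Chain rule for Pi o Pi = Pi:  D Pi(Pi x) . D Pi(x) = D Pi(x). *)
Lemma derive_retraction x v : A x ->
  'D_v Pi x = \sum_(i < d) ('D_v Pi x) i 0 *: 'D_(evec R i) Pi (Pi x).
Proof.
move=> Ax; have dx := dPi Ax; have dPx := dPi (APi Ax).
have PiPi_near : 'D_v Pi x = 'D_v (Pi \o Pi) x.
  apply: near_eq_derive; near=> z; rewrite /= PiPi //.
  by near: z; apply: open_nbhs_nbhs.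
have dc : differentiable (Pi \o Pi) x by exact: differentiable_comp.
rewrite {1}PiPi_near deriveE // diff_comp // /= (diff_in_basis _ dPx).
by rewrite deriveE.
Unshelve. all: by end_near. Qed.

Lemma DPi_idempotent y : A y -> Pi y = y -> DPi Pi y *m DPi Pi y = DPi Pi y.
Proof.
move=> Ay Py; apply/matrixP => c b.
rewrite [RHS]mxE (derive_retraction (evec R b) Ay) Py summxE !mxE.
by apply: eq_bigr => i _; rewrite !mxE mulrC.
Qed.

Lemma differentiable_DPi_Pi (i : 'I_d) y : A y -> Pi y = y ->
  differentiable ('D_(evec R i) Pi \o Pi) y.
Proof.
by move=> Ay Py; apply: differentiable_comp; [exact: dPi | rewrite Py; exact: dDPi].
Qed.

Lemma derive_DPi_Pi (a i c : 'I_d) y : A y -> Pi y = y ->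
  'D_(evec R a) (fun z => ('D_(evec R i) Pi (Pi z)) c 0) y =
  \sum_(j < d) DPi Pi y j a * (D2Pi Pi y j i) c 0.
Proof.
move=> Ay Py; have dc := differentiable_DPi_Pi i Ay Py.
rewrite (derive_coord (f := 'D_(evec R i) Pi \o Pi)); last exact: diff_derivable.
rewrite deriveE // diff_comp; [|exact: dPi|by rewrite Py; exact: dDPi].
rewrite compE (diff_in_basis _ (dDPi i (APi Ay))) summxE.
by apply: eq_bigr => j _; rewrite !mxE -(deriveE _ (dPi Ay)) Py.
Qed.

(* Second-order identity at a fixed point y (P = D Pi(y)):
   d_ab Pi^c = sum_i P^c_i d_ab Pi^i + sum_ij P^i_b P^j_a d_ji Pi^c,
   obtained by differentiating d_b Pi^c(z) = sum_i d_b Pi^i(z) d_i Pi^c(Pi z). *)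
Lemma D2Pi_retraction y (a b c : 'I_d) : A y -> Pi y = y ->
  (D2Pi Pi y a b) c 0 =
  \sum_(i < d) DPi Pi y c i * (D2Pi Pi y a b) i 0 +
  \sum_(i < d) \sum_(j < d) DPi Pi y i b * DPi Pi y j a * (D2Pi Pi y j i) c 0.
Proof.
move=> Ay Py.
pose f (i : 'I_d) (z : 'cV[R]_d) := ('D_(evec R b) Pi z) i 0.
pose g (i : 'I_d) (z : 'cV[R]_d) := ('D_(evec R i) Pi (Pi z)) c 0.
pose h (i : 'I_d) (z : 'cV[R]_d) := f i z * g i z.
have dDb : derivable ('D_(evec R b) Pi) y (evec R a).
  exact: diff_derivable (dDPi b Ay).
have df i : derivable (f i) y (evec R a).
  exact: (derivable_coord (i := i) (j := 0) dDb).
have dg i : derivable (g i) y (evec R a).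
  apply: (derivable_coord (f := fun z => 'D_(evec R i) Pi (Pi z))).
  exact: diff_derivable (differentiable_DPi_Pi i Ay Py).
have dh i : derivable (h i) y (evec R a) by exact: derivableM.
have chain_near : (D2Pi Pi y a b) c 0 = 'D_(evec R a) (\sum_(i < d) h i) y.
  rewrite /D2Pi -(derive_coord (f := 'D_(evec R b) Pi)) //.
  apply: near_eq_derive; near=> z.
  have Az : A z by near: z; apply: open_nbhs_nbhs.
  rewrite fct_sumE (derive_retraction _ Az) summxE.
  by apply: eq_bigr => i _; rewrite !mxE.
apply: (eq_trans chain_near).
rewrite derive_sum //.
have product_rule i : 'D_(evec R a) (h i) y =
    DPi Pi y i b * \sum_(j < d) DPi Pi y j a * (D2Pi Pi y j i) c 0 +
    DPi Pi y c i * (D2Pi Pi y a b) i 0.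
  rewrite (_ : h i = f i * g i) // deriveM // /g /f derive_DPi_Pi //.
  rewrite (derive_coord (f := 'D_(evec R b) Pi)) // Py.
  by rewrite /DPi /jac !mxE.
apply: eq_trans (eq_bigr _ (fun i _ => product_rule i)) _.
rewrite big_split /= addrC; congr (_ + _).
apply: eq_bigr => i _; rewrite big_distrr; apply: eq_bigr => j _; exact: mulrA.
Unshelve. all: by end_near. Qed.

End RetractionIdentities.

(* The linear algebra behind the vanishing of Pi^*H.  Think of P = D Pi(y) and
   D a b = d_ab Pi(y) at a point y of M: P is idempotent and D satisfies the
   second-order identity D2Pi_retraction.  H is normal (H = H (I - P)) and H'
   is the Gubinelli derivative of H . Q(X) at y. *)
Section NormalPullback.
Variables (R : comNzRingType) (d e : nat) (P : 'M[R]_d)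
  (D : 'I_d -> 'I_d -> 'cV[R]_d) (H : 'M[R]_(e, d)) (H' : 'I_d -> 'M[R]_(e, d)).
Hypotheses (P_idem : P *m P = P)
  (D_split : forall a b c, D a b c 0 = \sum_(i < d) P c i * D a b i 0 +
     \sum_(i < d) \sum_(j < d) P i b * P j a * D j i c 0)
  (H_normal : H = H *m (1%:M - P))
  (H'_leibniz : forall a,
     H' a = H' a *m (1%:M - P) + H *m (\matrix_(c, b) - D a b c 0)).

Let Dtan a b c := \sum_(i < d) \sum_(j < d) P i b * P j a * D j i c 0.

Lemma mulmx_P_compl m (N : 'M[R]_(m, d)) : N *m P = N - N *m (1%:M - P).
Proof. by rewrite mulmxBr mulmx1 opprB addrC subrK. Qed.

Lemma normal_mulP : H *m P = 0.
Proof. by rewrite mulmx_P_compl -H_normal subrr. Qed.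

Lemma leibniz_mulP a : H' a *m P = H *m (\matrix_(c, b) - D a b c 0).
Proof. by rewrite mulmx_P_compl {1}H'_leibniz addrAC subrr add0r. Qed.

Lemma normal_D k a b :
  \sum_(c < d) H k c * D a b c 0 = \sum_(c < d) H k c * Dtan a b c.
Proof.
have HP k' m : \sum_(c < d) H k' c * P c m = 0.
  by have := congr1 (fun N : 'M[R]_(e, d) => N k' m) normal_mulP; rewrite !mxE.
under eq_bigr do rewrite D_split mulrDr.
rewrite big_split /= -[RHS]add0r; congr (_ + _).
under eq_bigr do rewrite big_distrr.
rewrite exchange_big /=; apply: big1 => m _.
under eq_bigr do rewrite mulrA.
by rewrite -big_distrl /= HP mul0r.
Qed.

Lemma P_Dtan a b c : \sum_(i < d) P i a * Dtan i b c = Dtan a b c.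
Proof.
rewrite /Dtan; under eq_bigr do rewrite big_distrr.
rewrite exchange_big; apply: eq_bigr => i' _.
under eq_bigr do rewrite big_distrr.
rewrite exchange_big; apply: eq_bigr => j _ /=.
have -> : P j a = \sum_(i < d) P j i * P i a.
  by have := congr1 (fun N : 'M[R]_d => N j a) P_idem; rewrite !mxE => <-.
rewrite mulr_sumr big_distrl; apply: eq_bigr => i _ /=.
by rewrite mulrA [P i a * _]mulrC ![in RHS]mulrA -[P i' b * P j i * P i a]mulrA
  [P j i * P i a]mulrC.
Qed.

Lemma normal_pullback_deriv a :
  \matrix_(k, b) ((\sum_(i < d) \sum_(j < d) H' i k j * P i a * P j b)
     + \sum_(c < d) H k c * D a b c 0) = 0 :> 'M[R]_(e, d).
Proof.
apply/matrixP => k b; rewrite !mxE.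
have tangential : \sum_(i < d) \sum_(j < d) H' i k j * P i a * P j b =
    - \sum_(i < d) P i a * \sum_(c < d) H k c * D i b c 0.
  rewrite -sumrN; apply: eq_bigr => i _.
  have := congr1 (fun N : 'M[R]_(e, d) => N k b) (leibniz_mulP i).
  rewrite !mxE => HiP.
  have -> : \sum_(j < d) H' i k j * P i a * P j b =
      P i a * \sum_(j < d) H' i k j * P j b.
    by rewrite big_distrr; apply: eq_bigr => j _ /=; rewrite mulrCA mulrA.
  rewrite HiP -mulrN -sumrN; congr (_ * _); apply: eq_bigr => c _.
  by rewrite !mxE mulrN.
rewrite tangential normal_D; under eq_bigr do rewrite normal_D.
rewrite addrC; apply/eqP; rewrite subr_eq0; apply/eqP.
under [in RHS]eq_bigr do rewrite big_distrr.
rewrite [in RHS]exchange_big; apply: eq_bigr => c _ /=.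
rewrite -(P_Dtan a b c) big_distrr; apply: eq_bigr => i _ /=.
by rewrite mulrCA.
Qed.

End NormalPullback.

Section RoughIntegrals.
Variable R : realType.

Lemma simplex_left (T s t : R) : in_simplex T s t -> 0 <= s <= T.
Proof. by case=> s0 [st tT]; rewrite s0 (le_trans st tT). Qed.

Lemma simplex_right (T s t : R) : in_simplex T s t -> 0 <= t <= T.
Proof. by case=> s0 [st tT]; rewrite tT (le_trans s0 st). Qed.

Lemma interval_induction (delta : R) (Q : R -> R -> Prop) : 0 < delta ->
  (forall s t, s <= t -> t - s < delta -> Q s t) ->
  (forall s t, delta <= t - s -> Q (s + delta / 2) t -> Q s t) ->
  forall s t, s <= t -> Q s t.
Proof.
move=> delta0 short step s t st.
have [n len_n] : exists n : nat, t - s < n%:R * (delta / 2) + delta.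
  case: (lerP (t - s) 0) => ts; first by exists 0%N; rewrite mul0r add0r; lra.
  have ratio0 : 0 <= (t - s) / (delta / 2) by apply: divr_ge0; lra.
  exists (Num.Def.archi_bound ((t - s) / (delta / 2))).
  have := ltW (archi_boundP ratio0); rewrite ler_pdivrMr; lra.
elim: n s st len_n => [|n IH] s st len_n.
  by apply: short => //; move: len_n; rewrite mul0r add0r.
case: (ltP (t - s) delta) => [|long]; first exact: short.
apply: (step _ _ long); apply: IH; first lra.
move: len_n; rewrite -addn1 natrD mulrDl mul1r.
set N := n%:R * (delta / 2); lra.
Qed.

Lemma fine_partition (s t delta : R) : 0 < delta -> s <= t ->
  exists2 l, is_partition s t l & mesh s l < delta.
Proof.
move=> delta0; apply: (interval_induction
  (Q := fun s t => exists2 l, is_partition s t l & mesh s l < delta) delta0).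
- move=> {}s {}t st short; case: (eqVneq s t) => [<-|ne].
    by exists [::]; [split | rewrite /mesh big_nil].
  exists [:: t]; first by split => //=; rewrite andbT lt_neqAle ne st.
  by rewrite /mesh /= big_cons big_nil /= gt_max delta0 andbT.
- move=> {}s {}t long [l [pl ll] ml]; exists (s + delta / 2 :: l).
    by split => //=; rewrite pl ?andbT; lra.
  by rewrite /mesh /= big_cons /= gt_max ml andbT; lra.
Qed.

Lemma path_last (l : seq R) u : path <%R u l -> u <= last u l.
Proof.
elim: l u => [|v l IH] u /=; first by move=> _; exact: lexx.
by case/andP => uv pv; apply: le_trans (ltW uv) (IH _ pv).
Qed.

Lemma riemann_sum_congr (e : nat) (T s t : R) (g g' : R -> R -> 'cV[R]_e) l :
  (forall u v, 0 <= u <= T -> g u v = g' u v) ->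
  in_simplex T s t -> is_partition s t l ->
  riemann_sum g s l = riemann_sum g' s l.
Proof.
move=> gg [s0 [_ tT]] [pth lt]; subst t.
elim: l s s0 pth tT => [|u l IH] s s0 /=; first by rewrite /riemann_sum !big_nil.
case/andP => su pl lT; rewrite /riemann_sum /= !big_cons /=.
have uT : u <= T := le_trans (path_last pl) lT.
rewrite gg; last by rewrite s0 (le_trans (ltW su) uT).
by congr (_ + _); apply: IH (le_trans s0 (ltW su)) pl lT.
Qed.

Lemma rough_germ0 (d e : nat) (X : R -> 'cV[R]_d) (XX : R -> R -> 'M[R]_d)
  (H : R -> 'M[R]_(e, d)) (H' : R -> 'I_d -> 'M[R]_(e, d)) u v :
  H u = 0 -> (forall a, H' u a = 0) -> rough_germ X XX H H' u v = 0.
Proof.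
move=> H0 H'0; rewrite /rough_germ H0 mul0mx add0r big1 // => a _.
by rewrite big1 // => b _; rewrite H'0 col0 scaler0.
Qed.

Lemma norm_small_eq0 (V : normedZmodType R) (v : V) (c : R) : 0 <= c ->
  (forall eps : R, 0 < eps -> `|v| <= eps * c) -> v = 0.
Proof.
move=> c0 small; apply/eqP; rewrite -normr_le0; apply/ler_addgt0Pr => eps eps0.
have c1 : 0 < c + 1 by lra.
rewrite add0r; apply: le_trans (small _ (divr_gt0 eps0 c1)) _.
by rewrite mulrAC ler_pdivrMr // ler_wpM2l; lra.
Qed.

(* A two-parameter function which is additive on [0, T] and o(w) for a
   control w vanishes: subdivide and use the superadditivity of w. *)
Lemma additive_little_o_eq0 (m n : nat) (T : R) (w : R -> R -> R)
  (F : R -> R -> 'M[R]_(m, n)) : control T w ->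
  (forall s u t, 0 <= s -> s <= u -> u <= t -> t <= T ->
     F s t = F s u + F u t) ->
  little_o_w T w F -> forall s t, in_simplex T s t -> F s t = 0.
Proof.
case=> w0 _ w_super _ F_add F_small s t hst.
apply: (norm_small_eq0 (w0 s t hst)) => eps eps0.
have [delta delta0 F_short] := F_small eps eps0.
have st : s <= t by case: hst => _ [].
move: hst; apply: (interval_induction
  (Q := fun s t => in_simplex T s t -> `|F s t| <= eps * w s t) delta0 _ _ st).
- by move=> s' t' _ short hst; exact: F_short.
- move=> s' t' long IH [s0 [_ tT]]; set u := s' + delta / 2.
  have hsu : in_simplex T s' u by split => //; split; rewrite /u; lra.
  have hut : in_simplex T u t' by split; [rewrite /u; lra | split; rewrite /u; lra].
  rewrite (F_add s' u t'); try by rewrite /u; lra.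
  apply: le_trans (ler_normD _ _) _.
  apply: le_trans (lerD (F_short _ _ hsu _) (IH hut)) _; first by rewrite /u; lra.
  by rewrite -mulrDr ler_wpM2l ?w_super //; try by rewrite /u; lra.
Qed.

Section ZeroIntegrand.
Variables (d e : nat) (T p : R) (w : R -> R -> R)
  (X : R -> 'cV[R]_d) (XX : R -> R -> 'M[R]_d)
  (H : R -> 'M[R]_(e, d)) (H' : R -> 'I_d -> 'M[R]_(e, d)).
Hypothesis H_zero : forall t, 0 <= t <= T -> H t = 0 /\ forall a, H' t a = 0.

Lemma riemann_sum_zero s t l : in_simplex T s t -> is_partition s t l ->
  riemann_sum (rough_germ X XX H H') s l = 0.
Proof.
move=> hst pl; rewrite (riemann_sum_congr (g' := fun _ _ => 0) _ hst pl).
  by rewrite /riemann_sum big1.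
by move=> u v /H_zero[H0 H'0]; exact: rough_germ0.
Qed.

(* The trace is constant by the Riemann-sum characterisation, hence 0. *)
Lemma rough_integral_zero_trace Z ZZ :
  is_rough_integral T p w X XX H H' Z ZZ -> forall t, 0 <= t <= T -> Z t = 0.
Proof.
case=> _ Z0 Z_sums _.
have Z_const s t : in_simplex T s t -> Z t - Z s = 0.
  move=> hst; apply: (norm_small_eq0 (c := 1)) => [|eps eps0]; first exact: ler01.
  have [delta delta0 Z_fine] := Z_sums s t hst eps eps0.
  have st : s <= t by case: hst => _ [].
  have [l pl ml] := fine_partition delta0 st.
  have := Z_fine l pl ml; rewrite (riemann_sum_zero hst pl) sub0r normrN mulr1.
  exact: ltW.
move=> t /andP[t0 tT]; have := Z_const 0 t (conj (lexx 0) (conj t0 tT)).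
by rewrite Z0 subr0.
Qed.

(* The second-order part is additive by Chen's relation and o(w). *)
Lemma rough_integral_zero_second Z ZZ : control T w ->
  is_rough_integral T p w X XX H H' Z ZZ ->
  forall s t, in_simplex T s t -> ZZ s t = 0.
Proof.
move=> wc Zint; have Zt := rough_integral_zero_trace Zint.
case: Zint => [[_ chen] _ _ ZZ_small]; apply: (additive_little_o_eq0 wc).
  move=> s u t s0 su ut tT; rewrite (chen s u t) // (Zt u) ?(Zt s) ?subrr ?mul0mx ?addr0 //.
    by rewrite s0 (le_trans su (le_trans ut tT)).
  by rewrite (le_trans s0 su) (le_trans ut tT).
move=> eps eps0; have [delta delta0 ZZ_short] := ZZ_small eps eps0.
exists delta => // s t hst short; have := ZZ_short s t hst short.
by have [-> _] := H_zero (simplex_left hst); rewrite !mul0mx subr0.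
Qed.

Lemma zero_is_rough_integral Z ZZ : 0 <= T -> control T w ->
  (forall t, 0 <= t <= T -> Z t = 0) ->
  (forall s t, in_simplex T s t -> ZZ s t = 0) ->
  is_rough_integral T p w X XX H H' Z ZZ.
Proof.
move=> T0 [w0 _ _ _] Zt ZZ0; split.
- split.
    exists 0 => s t hst.
    rewrite (Zt t (simplex_right hst)) (Zt s (simplex_left hst)) (ZZ0 s t hst).
    by rewrite subrr !normr0 !mul0r.
  move=> s u t s0 su ut tT.
  have hst : in_simplex T s t by split => //; split => //; exact: le_trans su ut.
  have hsu : in_simplex T s u by split => //; split => //; exact: le_trans ut tT.
  have hut : in_simplex T u t by split => //; exact: le_trans s0 su.
  rewrite (ZZ0 _ _ hst) (ZZ0 _ _ hsu) (ZZ0 _ _ hut) (Zt u (simplex_right hsu)).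
  by rewrite (Zt s (simplex_left hsu)) subrr mul0mx !addr0.
- by apply: Zt; rewrite lexx T0.
- move=> s t hst eps eps0; exists 1 => // l pl _.
  rewrite (riemann_sum_zero hst pl) (Zt t (simplex_right hst)) (Zt s (simplex_left hst)).
  by rewrite subrr subr0 normr0.
- move=> eps eps0; exists 1 => // s t hst _.
  rewrite (ZZ0 _ _ hst); have [-> _] := H_zero (simplex_left hst).
  by rewrite !mul0mx subr0 normr0 mulr_ge0 // ?w0 // ltW.
Qed.

Lemma rough_integral_of_zero Z ZZ : 0 <= T -> control T w ->
  is_rough_integral T p w X XX H H' Z ZZ <->
  ((forall t, 0 <= t <= T -> Z t = 0) /\
   (forall s t, in_simplex T s t -> ZZ s t = 0)).
Proof.
move=> T0 wc; split; last by case; exact: zero_is_rough_integral.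
move=> Zint; split; first exact: rough_integral_zero_trace Zint.
exact: (rough_integral_zero_second wc Zint).
Qed.

End ZeroIntegrand.

Lemma rough_integral_congr (d e : nat) (T p : R) (w : R -> R -> R)
  (X : R -> 'cV[R]_d) (XX : R -> R -> 'M[R]_d)
  (H K : R -> 'M[R]_(e, d)) (H' K' : R -> 'I_d -> 'M[R]_(e, d))
  (Z : R -> 'cV[R]_e) (ZZ : R -> R -> 'M[R]_e) :
  (forall t, 0 <= t <= T -> H t = K t /\ forall a, H' t a = K' t a) ->
  is_rough_integral T p w X XX H H' Z ZZ ->
  is_rough_integral T p w X XX K K' Z ZZ.
Proof.
move=> HK [Zrp Z0 Z_sums ZZ_small]; split => //.
  move=> s t hst eps eps0; have [delta delta0 Z_fine] := Z_sums s t hst eps eps0.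
  exists delta => // l pl ml.
  rewrite (riemann_sum_congr (g' := rough_germ X XX H H') _ hst pl).
    exact: Z_fine.
  move=> u v /HK[Hu H'u]; rewrite /rough_germ Hu; congr (_ + _).
  by apply: eq_bigr => a _; rewrite H'u.
move=> eps eps0; have [delta delta0 ZZ_short] := ZZ_small eps eps0.
exists delta => // s t hst short.
by have [<- _] := HK s (simplex_left hst); exact: ZZ_short.
Qed.

End RoughIntegrals.

Lemma nearest_point_fixed (R : realType) d (M A : set 'cV[R]_d) Pi :
  nearest_point_projection M A Pi -> forall y, M y -> Pi y = y.
Proof.
case=> _ MA _ nearest y My; have [_ le_min unique] := nearest y (MA y My).
have dist0 : eucl2 (y - y) = 0.
  by rewrite subrr /eucl2 big1 // => i _; rewrite mxE expr2 mul0r.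
have dist_ge0 : 0 <= eucl2 (y - Pi y).
  by apply: sumr_ge0 => i _; exact: sqr_ge0.
apply/esym/unique => //; apply/eqP; rewrite dist0 eq_le dist_ge0 /=.
by rewrite -dist0 le_min.
Qed.

Lemma pullback_traceB (R : realType) d e (Pi : 'cV[R]_d -> 'cV[R]_d)
  (X : R -> 'cV[R]_d) (H K : R -> 'M[R]_(e, d)) t :
  pullback_trace Pi X (fun u => K u - H u) t =
  pullback_trace Pi X K t - pullback_trace Pi X H t.
Proof. exact: mulmxBl. Qed.

Lemma pullback_derivB (R : realType) d e (Pi : 'cV[R]_d -> 'cV[R]_d)
  (X : R -> 'cV[R]_d) (H K : R -> 'M[R]_(e, d))
  (H' K' : R -> 'I_d -> 'M[R]_(e, d)) t a :
  pullback_deriv Pi X (fun u => K u - H u) (fun u b => K' u b - H' u b) t a =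
  pullback_deriv Pi X K K' t a - pullback_deriv Pi X H H' t a.
Proof.
apply/matrixP => k b; rewrite !mxE opprD addrACA -!sumrB.
congr (_ + _); apply: eq_bigr => i _; last by rewrite !mxE mulrBl.
by rewrite -sumrB; apply: eq_bigr => j _; rewrite !mxE !mulrBl.
Qed.

Lemma pullback_of_normal (R : realType) d e (M A : set 'cV[R]_d) Pi
  (X : R -> 'cV[R]_d) (H : R -> 'M[R]_(e, d)) (H' : R -> 'I_d -> 'M[R]_(e, d)) t :
  nearest_point_projection M A Pi -> M (X t) ->
  H t = leibnizQ_trace Pi X H t ->
  (forall a, H' t a = leibnizQ_deriv Pi X H H' t a) ->
  pullback_trace Pi X H t = 0 /\ forall a, pullback_deriv Pi X H H' t a = 0.
Proof.
move=> npp MX HQ H'Q; have fixed := nearest_point_fixed npp.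
case: npp => openA MA smooth nearest.
have APi x : A x -> A (Pi x) by move=> /nearest[MPi _ _]; exact: MA.
have PiPi x : A x -> Pi (Pi x) = Pi x by move=> /nearest[MPi _ _]; exact: fixed.
have dPi := (smooth 2%N).1; have dDPi a := ((smooth 2%N).2 a).1.
have AX := MA _ MX; have PX := fixed _ MX.
split; first exact: normal_mulP HQ.
exact: (normal_pullback_deriv (DPi_idempotent openA dPi APi PiPi AX PX)
  (fun a b c => D2Pi_retraction openA dPi dDPi APi PiPi a b c AX PX) HQ H'Q).
Qed.

Unset Implicit Arguments.

Theorem mainTheorem10 (R : realType) (d e : nat) (T p : R)
  (w : R -> R -> R) (M A : set 'cV[R]_d) (Pi : 'cV[R]_d -> 'cV[R]_d)
  (X : R -> 'cV[R]_d) (XX : R -> R -> 'M[R]_d) :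
  0 <= T -> 1 <= p -> p < 3 -> control T w ->
  embedded_submanifold M -> nearest_point_projection M A Pi ->
  manifold_rough_path T p w M Pi X XX ->
  (* (1) *)
  (forall (H : R -> 'M[R]_(e, d)) (H' : R -> 'I_d -> 'M[R]_(e, d)),
     controlled T p w X H H' ->
     (forall t, 0 <= t <= T ->
        H t = leibnizQ_trace Pi X H t /\
        forall a, H' t a = leibnizQ_deriv Pi X H H' t a) ->
     forall (Z : R -> 'cV[R]_e) (ZZ : R -> R -> 'M[R]_e),
       is_constrained_rough_integral T p w Pi X XX H H' Z ZZ <->
       ((forall t, 0 <= t <= T -> Z t = 0) /\
        (forall s t, in_simplex T s t -> ZZ s t = 0))) /\
  (* (2) *)
  (forall (H K : R -> 'M[R]_(e, d)) (H' K' : R -> 'I_d -> 'M[R]_(e, d)),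
     controlled T p w X H H' -> controlled T p w X K K' ->
     (forall t, 0 <= t <= T ->
        K t - H t = leibnizQ_trace Pi X (fun u => K u - H u) t /\
        forall a, K' t a - H' t a =
          leibnizQ_deriv Pi X (fun u => K u - H u) (fun u b => K' u b - H' u b) t a) ->
     forall (Z : R -> 'cV[R]_e) (ZZ : R -> R -> 'M[R]_e),
       is_constrained_rough_integral T p w Pi X XX H H' Z ZZ <->
       is_constrained_rough_integral T p w Pi X XX K K' Z ZZ).
Proof.
move=> T0 _ _ wc _ npp [_ XM _].
have normal_pullback (H : R -> 'M[R]_(e, d)) (H' : R -> 'I_d -> 'M[R]_(e, d)) t :
    0 <= t <= T ->
    H t = leibnizQ_trace Pi X H t /\
      (forall a, H' t a = leibnizQ_deriv Pi X H H' t a) ->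
    pullback_trace Pi X H t = 0 /\
      forall a, pullback_deriv Pi X H H' t a = 0.
  by move=> ht [HQ H'Q]; exact: pullback_of_normal npp (XM t ht) HQ H'Q.
rewrite /is_constrained_rough_integral; split.
  move=> H H' _ HQ Z ZZ; apply: rough_integral_of_zero => // t ht.
  exact: normal_pullback (HQ t ht).
move=> H K H' K' _ _ KHQ Z ZZ.
have same_pullback t : 0 <= t <= T ->
    pullback_trace Pi X H t = pullback_trace Pi X K t /\
    forall a, pullback_deriv Pi X H H' t a = pullback_deriv Pi X K K' t a.
  move=> ht; have [tr0 der0] := normal_pullback _ _ t ht (KHQ t ht).
  split=> [|a]; apply/eqP; rewrite eq_sym -subr_eq0.
    by rewrite -pullback_traceB tr0.
  by rewrite -pullback_derivB der0.
split; apply: rough_integral_congr => t /same_pullback[tr der].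
  by split.
by split=> [|a]; rewrite ?der.
Qed.
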